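(* Let $G$ be a non-cyclic group having a maximal subgroup $M$ that is cyclic of order $p^n$ with $p$ prime and $n\geq 1$. Then $H_1(|\mathcal{C}(G)|;\mathbb{Z})$ has rank at least $(p-1)(G:M)$, and has infinite rank if $G$ is infinite. In particular $|\mathcal{C}(G)|$ is not simply connected.
   Context: For a group $G$, the coset poset $\mathcal{C}(G)$ is the set of left cosets of all proper subgroups of $G$ (including the trivial subgroup), ordered by inclusion, and $|\mathcal{C}(G)|$ is the geometric realization of its order complex (chains). *)

(* Groups are possibly infinite, so they are given by an
   explicit carrier with operations and axioms. *)
From Stdlib Require Import ZArith List Znumtheory Relations.
Import ListNotations.
Open Scope Z_scope.

Record group := Group {
  gT :> Type;
  gmul : gT -> gT -> gT;
  gone : gT;
  ginv : gT -> gT;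
  gmulA : forall x y z, gmul x (gmul y z) = gmul (gmul x y) z;
  gmul1l : forall x, gmul gone x = x;
  gmulVl : forall x, gmul (ginv x) x = gone
}.
Arguments gmul {g}. Arguments gone {g}. Arguments ginv {g}.

Fixpoint gpow_nat {G : group} (g : G) (n : nat) : G :=
  match n with O => gone | S k => gmul g (gpow_nat g k) end.

Definition gpow {G : group} (g : G) (z : Z) : G :=
  match z with
  | Z0 => gone
  | Zpos q => gpow_nat g (Pos.to_nat q)
  | Zneg q => ginv (gpow_nat g (Pos.to_nat q))
  end.

Definition subgroup {G : group} (H : G -> Prop) : Prop :=
  H gone /\ (forall x y, H x -> H y -> H (gmul x y)) /\ (forall x, H x -> H (ginv x)).

Definition proper_subgroup {G : group} (H : G -> Prop) : Prop :=
  subgroup H /\ exists x, ~ H x.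

Definition maximal_subgroup {G : group} (M : G -> Prop) : Prop :=
  proper_subgroup M /\
  forall K : G -> Prop, subgroup K -> (forall x, M x -> K x) ->
    (forall x, K x <-> M x) \/ (forall x, K x).

Definition cyclic_subgroup {G : group} (M : G -> Prop) : Prop :=
  exists g, forall x, M x <-> exists z : Z, x = gpow g z.

Definition cyclic_group (G : group) : Prop :=
  exists g : G, forall x : G, exists z : Z, x = gpow g z.

Definition has_card {G : group} (M : G -> Prop) (m : nat) : Prop :=
  exists l : list G, NoDup l /\ length l = m /\ forall x, M x <-> In x l.

Definition infinite_group (G : group) : Prop :=
  ~ exists l : list G, forall x : G, In x l.

Definition lcoset {G : group} (x : G) (H : G -> Prop) : G -> Prop :=
  fun y => exists h, H h /\ y = gmul x h.

Definition distinct_lcosets {G : group} (M : G -> Prop) (reps : list G) : Prop :=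
  ForallOrdPairs (fun x y => ~ (forall t, lcoset x M t <-> lcoset y M t)) reps.

Definition coset_poset (G : group) (S : G -> Prop) : Prop :=
  exists (x : G) (H : G -> Prop), proper_subgroup H /\ S = lcoset x H.

Definition proper_incl {G : group} (S T : G -> Prop) : Prop :=
  (forall y, S y -> T y) /\ ~ (forall y, T y -> S y).

(* Chains are oriented along the order (v0 < v1 < ... ). *)

Definition has_sum {X : Type} (f : X -> Z) (s : Z) : Prop :=
  exists l : list X, NoDup l /\ (forall x, f x <> 0 -> In x l) /\
    s = fold_right (fun x acc => f x + acc) 0 l.

Definition chain1 (V : Type) := V -> V -> Z.
Definition chain2 (V : Type) := V -> V -> V -> Z.

Definition is_1chain {V : Type} (P : V -> Prop) (lt : V -> V -> Prop)
  (c : chain1 V) : Prop :=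
  (forall u v, c u v <> 0 -> P u /\ P v /\ lt u v) /\
  exists l : list (V * V), forall u v, c u v <> 0 -> In (u, v) l.

Definition is_2chain {V : Type} (P : V -> Prop) (lt : V -> V -> Prop)
  (c : chain2 V) : Prop :=
  (forall u v w, c u v w <> 0 -> P u /\ P v /\ P w /\ lt u v /\ lt v w) /\
  exists l : list (V * V * V), forall u v w, c u v w <> 0 -> In (u, v, w) l.

(* boundary of edge (u,v) is v - u *)
Definition is_1cycle {V : Type} (P : V -> Prop) (lt : V -> V -> Prop)
  (c : chain1 V) : Prop :=
  is_1chain P lt c /\ forall w, has_sum (fun u => c u w - c w u) 0.

(* boundary of (a,b,c) is (b,c) - (a,c) + (a,b) *)
Definition is_1boundary {V : Type} (P : V -> Prop) (lt : V -> V -> Prop)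
  (c : chain1 V) : Prop :=
  exists d : chain2 V, is_2chain P lt d /\
    forall u v, has_sum (fun x => d x u v - d u x v + d u v x) (c u v).

Definition lincomb {V : Type} (a : list Z) (zs : list (chain1 V)) : chain1 V :=
  fun u v => fold_right (fun az acc => fst az * snd az u v + acc) 0 (combine a zs).

(* rank of H_1(order complex; Z) is at least k: there are k cycles whose
   classes are Z-linearly independent in H_1 *)
Definition H1_rank_ge {V : Type} (P : V -> Prop) (lt : V -> V -> Prop)
  (k : nat) : Prop :=
  exists zs : list (chain1 V), length zs = k /\ Forall (is_1cycle P lt) zs /\
    forall a : list Z, length a = k -> Exists (fun x => x <> 0) a ->
      ~ is_1boundary P lt (lincomb a zs).

Definition H1_infinite_rank {V : Type} (P : V -> Prop) (lt : V -> V -> Prop) : Prop :=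
  forall k : nat, H1_rank_ge P lt k.

Definition adj {V : Type} (P : V -> Prop) (lt : V -> V -> Prop) (u v : V) : Prop :=
  P u /\ P v /\ (u = v \/ lt u v \/ lt v u).

Fixpoint is_edge_path {V : Type} (P : V -> Prop) (lt : V -> V -> Prop)
  (l : list V) : Prop :=
  match l with
  | [] => False
  | [u] => P u
  | u :: ((v :: _) as t) => adj P lt u v /\ is_edge_path P lt t
  end.

Definition edge_move {V : Type} (P : V -> Prop) (lt : V -> V -> Prop)
  (l l' : list V) : Prop :=
  (exists l1 l2 u v w, l = l1 ++ u :: v :: w :: l2 /\ l' = l1 ++ u :: w :: l2 /\
     adj P lt u v /\ adj P lt v w /\ adj P lt u w) \/
  (exists l1 l2 u, l = l1 ++ u :: u :: l2 /\ l' = l1 ++ u :: l2).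

Definition edge_equiv {V : Type} (P : V -> Prop) (lt : V -> V -> Prop) :
  list V -> list V -> Prop :=
  clos_refl_sym_trans (list V) (edge_move P lt).

Definition simply_connected {V : Type} (P : V -> Prop) (lt : V -> V -> Prop) : Prop :=
  (exists v, P v) /\
  (forall u v, P u -> P v -> exists l, is_edge_path P lt l /\
      hd_error l = Some u /\ last l u = v) /\
  (forall v0 l, P v0 -> is_edge_path P lt l -> hd_error l = Some v0 ->
      last l v0 = v0 -> edge_equiv P lt l [v0]).

(* Write M = <m>, of order p^n, and let K = <m^p> be its unique maximal subgroup; fix t outside M.
   For every coset x M and 1 <= i < p the closed edge path
     {x} < x<t> > {x t} < x t<t^-1 m^i> > {x m^i} < x M > {x}
   is a 1-cycle of the order complex (G is not cyclic, so every cyclic subgroup is proper).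
   Dually, for a coset y M and 1 <= j < p let phi be the 1-cochain equal to 1 on the edges
   u < y M with u contained in y m^j K, and 0 elsewhere. Since y M is maximal in C(G) and every
   vertex strictly below y M is a coset of a proper subgroup of M, hence lies in a single coset of
   K, phi is a cocycle. So phi vanishes on boundaries and is invariant under edge-path
   homotopies, while its value on the loop (x, i) is 1 if (x, i) = (y, j) and 0 otherwise. *)

From Stdlib Require Import ZArith List Znumtheory.
From Stdlib Require Import Classical ClassicalEpsilon Permutation Lia FunctionalExtensionality.
Import ListNotations.
Open Scope Z_scope.

Definition iverson (P : Prop) : Z := if excluded_middle_informative P then 1 else 0.

Lemma iverson_true (P : Prop) : P -> iverson P = 1.
Proof. unfold iverson; destruct excluded_middle_informative; tauto. Qed.

Lemma iverson_false (P : Prop) : ~ P -> iverson P = 0.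
Proof. unfold iverson; destruct excluded_middle_informative; tauto. Qed.

Lemma iverson_iff (P Q : Prop) : (P <-> Q) -> iverson P = iverson Q.
Proof.
  unfold iverson; destruct (excluded_middle_informative P), (excluded_middle_informative Q); tauto.
Qed.

Lemma iverson_and (P Q : Prop) : iverson (P /\ Q) = iverson P * iverson Q.
Proof.
  unfold iverson.
  destruct (excluded_middle_informative P), (excluded_middle_informative Q),
    (excluded_middle_informative (P /\ Q)); tauto || lia.
Qed.

Definition classic_eq_dec {X : Type} (x y : X) : {x = y} + {x <> y} :=
  excluded_middle_informative (x = y).

Definition lsum {X : Type} (l : list X) (f : X -> Z) : Z :=
  fold_right (fun x acc => f x + acc) 0 l.

Section ListSums.
Context {X : Type}.
Implicit Types (l : list X) (f g : X -> Z).

Lemma lsum_cons x l f : lsum (x :: l) f = f x + lsum l f.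
Proof. reflexivity. Qed.

Lemma eq_lsum l f g : (forall x, In x l -> f x = g x) -> lsum l f = lsum l g.
Proof.
  induction l as [|a l IH]; intros H; [reflexivity|].
  rewrite !lsum_cons, H, IH; auto with datatypes.
Qed.

Lemma lsumD l f g : lsum l (fun x => f x + g x) = lsum l f + lsum l g.
Proof. induction l; [reflexivity|]. rewrite !lsum_cons, IHl; lia. Qed.

Lemma lsumB l f g : lsum l (fun x => f x - g x) = lsum l f - lsum l g.
Proof. induction l; [reflexivity|]. rewrite !lsum_cons, IHl; lia. Qed.

Lemma lsumZ l c f : lsum l (fun x => c * f x) = c * lsum l f.
Proof. induction l; [simpl; lia|]. rewrite !lsum_cons, IHl; lia. Qed.

Lemma lsum0 l f : (forall x, In x l -> f x = 0) -> lsum l f = 0.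
Proof.
  intros H. rewrite (eq_lsum l f (fun _ => 0)) by auto.
  clear H. induction l; simpl; auto.
Qed.

Lemma perm_lsum l k f : Permutation l k -> lsum l f = lsum k f.
Proof. induction 1; simpl; auto; unfold lsum in *; simpl in *; lia. Qed.

Lemma lsum_filter_nonzero l f : lsum l f = lsum (filter (fun x => negb (f x =? 0)) l) f.
Proof.
  induction l as [|a l IH]; [reflexivity|]. cbn [filter].
  destruct (Z.eqb_spec (f a) 0); cbn [negb]; rewrite lsum_cons, IH; try rewrite lsum_cons; lia.
Qed.

Lemma lsum_support l k f : NoDup l -> NoDup k ->
  (forall x, f x <> 0 -> In x l) -> (forall x, f x <> 0 -> In x k) -> lsum l f = lsum k f.
Proof.
  intros Nl Nk Hl Hk. rewrite (lsum_filter_nonzero l), (lsum_filter_nonzero k).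
  apply perm_lsum, NoDup_Permutation; try apply NoDup_filter; auto.
  intros x; rewrite !filter_In.
  destruct (Z.eqb_spec (f x) 0); simpl; split; intros [? ?]; auto; discriminate.
Qed.

Lemma lsum_iverson_eq l a f : NoDup l -> In a l -> lsum l (fun u => iverson (u = a) * f u) = f a.
Proof.
  induction l as [|b l IH]; intros N Ha; [destruct Ha|]. inversion N; subst. rewrite lsum_cons.
  destruct Ha as [<-|Ha].
  - rewrite iverson_true by reflexivity.
    rewrite lsum0; [lia|]. intros x Hx. rewrite iverson_false; [lia|]. intros ->; tauto.
  - rewrite iverson_false, IH by (auto || (intros ->; tauto)). lia.
Qed.

Lemma has_sum_lsum f l : NoDup l -> (forall x, f x <> 0 -> In x l) -> has_sum f (lsum l f).
Proof. intros. exists l. auto. Qed.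

Lemma has_sumE f s l : has_sum f s -> NoDup l -> (forall x, f x <> 0 -> In x l) -> s = lsum l f.
Proof. intros [k [Nk [Hk ->]]] N H. apply lsum_support; auto. Qed.

End ListSums.

Lemma exchange_lsum {X Y : Type} (l : list X) (k : list Y) (F : X -> Y -> Z) :
  lsum l (fun x => lsum k (fun y => F x y)) = lsum k (fun y => lsum l (fun x => F x y)).
Proof.
  induction l as [|a l IH].
  - rewrite (lsum0 k) by reflexivity; reflexivity.
  - rewrite lsum_cons, IH, <- lsumD. reflexivity.
Qed.

Arguments gmulA {g}. Arguments gmul1l {g}. Arguments gmulVl {g}.

Section Groups.
Variable G : group.
Implicit Types x y z g : G.

Lemma mulgV x : gmul x (ginv x) = gone.
Proof.
  rewrite <- (gmul1l (gmul x (ginv x))), <- (gmulVl (ginv x)) at 1.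
  rewrite <- gmulA, (gmulA (ginv x)), gmulVl, gmul1l. apply gmulVl.
Qed.

Lemma mulg1 x : gmul x gone = x.
Proof. rewrite <- (gmulVl x), gmulA, mulgV, gmul1l. reflexivity. Qed.

Lemma mulKg x y : gmul (ginv x) (gmul x y) = y.
Proof. rewrite gmulA, gmulVl, gmul1l; reflexivity. Qed.

Lemma mulKVg x y : gmul x (gmul (ginv x) y) = y.
Proof. rewrite gmulA, mulgV, gmul1l; reflexivity. Qed.

Lemma mulgI x y z : gmul x y = gmul x z -> y = z.
Proof. intros H. rewrite <- (mulKg x y), H, mulKg; reflexivity. Qed.

Lemma invg_unique x y : gmul x y = gone -> y = ginv x.
Proof. intros H. apply (mulgI x). rewrite H, mulgV; reflexivity. Qed.

Lemma invMg x y : ginv (gmul x y) = gmul (ginv y) (ginv x).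
Proof.
  symmetry; apply invg_unique.
  rewrite <- gmulA, (gmulA y), mulgV, gmul1l, mulgV. reflexivity.
Qed.

Lemma invgK x : ginv (ginv x) = x.
Proof. symmetry; apply invg_unique, gmulVl. Qed.

Lemma invg1 : ginv (@gone G) = gone.
Proof. symmetry; apply invg_unique, mulg1. Qed.

Lemma gpow_nat_S_r g k : gpow_nat g (S k) = gmul (gpow_nat g k) g.
Proof.
  induction k as [|k IH]; simpl; [rewrite mulg1, gmul1l; reflexivity|].
  simpl in IH. rewrite IH at 1. apply gmulA.
Qed.

Lemma gpow_nonneg g a : 0 <= a -> gpow g a = gpow_nat g (Z.to_nat a).
Proof. destruct a; simpl; auto; lia. Qed.

Lemma gpow_neg g a : a < 0 -> gpow g a = ginv (gpow_nat g (Z.to_nat (- a))).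
Proof. destruct a; simpl; auto; lia. Qed.

Lemma gpow_succ g a : gpow g (Z.succ a) = gmul g (gpow g a).
Proof.
  destruct (Z_lt_le_dec a (-1)) as [H|H].
  - rewrite !gpow_neg by lia.
    replace (Z.to_nat (- a)) with (S (Z.to_nat (- Z.succ a))) by lia.
    rewrite gpow_nat_S_r, invMg, mulKVg. reflexivity.
  - destruct (Z.eq_dec a (-1)) as [->|H'].
    + simpl. rewrite mulg1, mulgV. reflexivity.
    + rewrite !gpow_nonneg by lia. replace (Z.to_nat (Z.succ a)) with (S (Z.to_nat a)) by lia.
      reflexivity.
Qed.

Lemma gpow_pred g a : gpow g (Z.pred a) = gmul (ginv g) (gpow g a).
Proof. rewrite <- (Z.succ_pred a) at 2. rewrite gpow_succ, mulKg. reflexivity. Qed.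

Lemma gpow1 g : gpow g 1 = g.
Proof. apply mulg1. Qed.

Lemma gpowD g a b : gpow g (a + b) = gmul (gpow g a) (gpow g b).
Proof.
  induction a as [|a IH|a IH] using Z.peano_ind.
  - symmetry; apply gmul1l.
  - rewrite Z.add_succ_l, !gpow_succ, IH, gmulA. reflexivity.
  - rewrite Z.add_pred_l, !gpow_pred, IH, gmulA. reflexivity.
Qed.

Lemma gpowN g a : gpow g (- a) = ginv (gpow g a).
Proof. apply invg_unique. rewrite <- gpowD, Z.add_opp_diag_r. reflexivity. Qed.

Lemma gpowM g a b : gpow (gpow g a) b = gpow g (a * b).
Proof.
  induction b as [|b IH|b IH] using Z.peano_ind.
  - rewrite Z.mul_0_r. reflexivity.
  - rewrite gpow_succ, IH, <- gpowD. f_equal; lia.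
  - rewrite gpow_pred, IH, <- gpowN, <- gpowD. f_equal; lia.
Qed.

Lemma gpow1n a : gpow (@gone G) a = gone.
Proof.
  induction a as [|a IH|a IH] using Z.peano_ind; [reflexivity| |].
  - rewrite gpow_succ, IH, gmul1l; reflexivity.
  - rewrite gpow_pred, IH, invg1, gmul1l; reflexivity.
Qed.

Lemma gpow_eq_sub g a b : gpow g a = gpow g b -> gpow g (b - a) = gone.
Proof.
  intros H. apply (mulgI (gpow g a)). rewrite <- gpowD, mulg1, Zplus_minus. auto.
Qed.

Lemma subgroup_gpow (H : G -> Prop) g a : subgroup H -> H g -> H (gpow g a).
Proof.
  intros [H1 [HM HI]] Hg.
  induction a using Z.peano_ind; [exact H1|rewrite gpow_succ|rewrite gpow_pred]; auto.
Qed.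

Definition cycle g : G -> Prop := fun x => exists a, x = gpow g a.
Definition triv : G -> Prop := fun x => x = gone.

Lemma cycle_subgroup g : subgroup (cycle g).
Proof.
  split; [|split].
  - exists 0; reflexivity.
  - intros x y [a ->] [b ->]. exists (a + b). symmetry; apply gpowD.
  - intros x [a ->]. exists (- a). symmetry; apply gpowN.
Qed.

Lemma cycle_id g : cycle g g.
Proof. exists 1. symmetry; apply gpow1. Qed.

Lemma triv_subgroup : subgroup triv.
Proof.
  unfold triv; split; [|split]; auto.
  - intros x y -> ->. apply gmul1l.
  - intros x ->. apply invg1.
Qed.

Lemma lcoset_refl (H : G -> Prop) x : subgroup H -> lcoset x H x.
Proof. intros [H1 _]. exists gone. rewrite mulg1. auto. Qed.

Lemma lcosetE (H : G -> Prop) x y : lcoset x H y <-> H (gmul (ginv x) y).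
Proof.
  split.
  - intros [h [Hh ->]]. rewrite mulKg. auto.
  - intros Hh. exists (gmul (ginv x) y). rewrite mulKVg; auto.
Qed.

Lemma lcoset_transl (H : G -> Prop) x q : subgroup H -> lcoset x H q ->
  forall g, lcoset x H g <-> lcoset q H g.
Proof.
  intros [H1 [HM HI]] [h [Hh ->]] g. rewrite !lcosetE, invMg, <- gmulA.
  split; intros Hg.
  - auto.
  - rewrite <- (mulKVg h (gmul (ginv x) g)). auto.
Qed.

Lemma lcoset_triv x g : lcoset x triv g <-> g = x.
Proof.
  rewrite lcosetE. unfold triv. split.
  - intros E. rewrite <- (mulKVg x g), E. apply mulg1.
  - intros ->. apply gmulVl.
Qed.

End Groups.
Arguments cycle {G}. Arguments triv {G}.

Lemma rel_prime_pow_r (a q : Z) (n : nat) : rel_prime a q -> rel_prime a (q ^ Z.of_nat n).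
Proof.
  intros H. induction n as [|n IH].
  - apply rel_prime_sym, rel_prime_1.
  - rewrite Nat2Z.inj_succ, Z.pow_succ_r by lia. apply rel_prime_mult; auto.
Qed.

Lemma NoDup_map_seq {X} (f : nat -> X) a k :
  (forall i j, (a <= i)%nat -> (i < j)%nat -> (j < a + k)%nat -> f i <> f j) ->
  NoDup (map f (seq a k)).
Proof.
  revert a; induction k as [|k IH]; intros a H; simpl; constructor.
  - rewrite in_map_iff. intros [j [Hj Hin]]. rewrite in_seq in Hin. apply (H a j); auto; lia.
  - apply IH. intros i j Hi Hij Hj. apply H; lia.
Qed.

Section CyclicGroupOrder.
Variables (G : group) (M : G -> Prop) (m : G).
Hypothesis HM : forall x, M x <-> cycle m x.

Lemma gpow_mod (d : nat) a : (0 < d)%nat -> gpow m (Z.of_nat d) = gone ->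
  gpow m a = gpow m (a mod Z.of_nat d).
Proof.
  intros Hd Hm. rewrite (Z_div_mod_eq_full a (Z.of_nat d)) at 1.
  rewrite gpowD, <- gpowM, Hm, gpow1n, gmul1l. reflexivity.
Qed.

Lemma cycle_has_exponent N : has_card M N -> exists d, (1 <= d)%nat /\ gpow m (Z.of_nat d) = gone.
Proof.
  intros [LM [ND [Hlen HL]]]. apply NNPP; intros Hno.
  set (f := fun k : nat => gpow m (Z.of_nat k)).
  assert (Hinj : NoDup (map f (seq 0 (S N)))).
  { apply NoDup_map_seq. intros i j _ Hij _ Heq. apply Hno. exists (j - i)%nat. split; [lia|].
    rewrite Nat2Z.inj_sub by lia. apply gpow_eq_sub; auto. }
  assert (Hsub : incl (map f (seq 0 (S N))) LM).
  { intros x Hx. apply in_map_iff in Hx. destruct Hx as [k [<- _]].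
    apply HL, HM. exists (Z.of_nat k); reflexivity. }
  pose proof (NoDup_incl_length Hinj Hsub) as Hle. rewrite length_map, length_seq in Hle. lia.
Qed.

Section LeastExponent.
Variable d : nat.
Hypothesis Hd1 : (1 <= d)%nat.
Hypothesis Hmd : gpow m (Z.of_nat d) = gone.
Hypothesis Hleast : forall k, (1 <= k)%nat -> gpow m (Z.of_nat k) = gone -> (d <= k)%nat.

Lemma least_exponent_dvd e : gpow m e = gone -> (Z.of_nat d | e).
Proof.
  intros He. destruct (Z.eq_dec (e mod Z.of_nat d) 0) as [Hr|Hr].
  - apply Z.mod_divide; lia.
  - exfalso. rewrite (gpow_mod d) in He by (auto; lia).
    pose proof (Z.mod_pos_bound e (Z.of_nat d) ltac:(lia)).
    assert (Hle := Hleast (Z.to_nat (e mod Z.of_nat d)) ltac:(lia)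
      ltac:(rewrite Z2Nat.id by lia; exact He)). lia.
Qed.

Lemma least_exponent_card N : has_card M N -> d = N.
Proof.
  intros [LM [ND [Hlen HL]]]. subst N.
  set (f := fun k : nat => gpow m (Z.of_nat k)).
  assert (Hinj : NoDup (map f (seq 0 d))).
  { apply NoDup_map_seq. intros i j _ Hij Hj Heq. apply gpow_eq_sub in Heq.
    rewrite <- Nat2Z.inj_sub in Heq by lia. apply Hleast in Heq; lia. }
  assert (Hperm : Permutation (map f (seq 0 d)) LM).
  { apply NoDup_Permutation; auto. intros x; rewrite <- HL, HM, in_map_iff. split.
    - intros [k [<- _]]. exists (Z.of_nat k); reflexivity.
    - intros [z ->]. pose proof (Z.mod_pos_bound z (Z.of_nat d) ltac:(lia)).
      exists (Z.to_nat (z mod Z.of_nat d)). rewrite in_seq. split; [|lia].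
      unfold f. rewrite Z2Nat.id by lia. symmetry; apply gpow_mod; auto; lia. }
  apply Permutation_length in Hperm. rewrite length_map, length_seq in Hperm. exact Hperm.
Qed.

End LeastExponent.

Lemma card_cycle_exponent N : has_card M N ->
  gpow m (Z.of_nat N) = gone /\ forall e, gpow m e = gone -> (Z.of_nat N | e).
Proof.
  intros HN.
  set (E := fun k => (1 <= k)%nat /\ gpow m (Z.of_nat k) = gone).
  destruct (dec_inh_nat_subset_has_unique_least_element E (fun k => classic (E k))
    (cycle_has_exponent N HN)) as [d [[[Hd1 Hmd] Hleast] _]].
  assert (Hleast' : forall k, (1 <= k)%nat -> gpow m (Z.of_nat k) = gone -> (d <= k)%nat)
    by (intros k Hk Hmk; apply Hleast; split; auto).
  rewrite <- (least_exponent_card d Hd1 Hmd Hleast' N HN).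
  split; [exact Hmd|apply least_exponent_dvd; auto].
Qed.

End CyclicGroupOrder.

Definition mult_subgroup {G : group} (m : G) (q : Z) : G -> Prop :=
  fun x => exists z, x = gpow m (q * z).

Lemma mult_subgroup_subgroup (G : group) (m : G) q : subgroup (mult_subgroup m q).
Proof.
  split; [|split].
  - exists 0. rewrite Z.mul_0_r; reflexivity.
  - intros x y [a ->] [b ->]. exists (a + b). rewrite <- gpowD. f_equal; ring.
  - intros x [a ->]. exists (- a). rewrite <- gpowN. f_equal; ring.
Qed.

Section CyclicPGroup.
Variables (G : group) (M : G -> Prop) (m : G) (p n : nat).
Hypothesis Hp : prime (Z.of_nat p).
Hypothesis HM : forall x, M x <-> cycle m x.

Lemma cyclic_p_group_exponent : (1 <= n)%nat -> has_card M (p ^ n) ->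
  gpow m (Z.of_nat p ^ Z.of_nat n) = gone /\ forall e, gpow m e = gone -> (Z.of_nat p | e).
Proof.
  intros Hn Hcard. rewrite <- Nat2Z.inj_pow.
  destruct (card_cycle_exponent G M m HM _ Hcard) as [Hord Hdvd].
  split; [exact Hord|]. intros e He. eapply Z.divide_trans, Hdvd, He.
  destruct n as [|k]; [lia|]. exists (Z.of_nat (p ^ k)). rewrite <- Nat2Z.inj_mul. f_equal.
  simpl. apply Nat.mul_comm.
Qed.

(* An element [m^k] with [p] not dividing [k] generates [M], by Bezout against [p^n]. *)
Lemma proper_subgroup_cyclic_p_group (H : G -> Prop) :
  gpow m (Z.of_nat p ^ Z.of_nat n) = gone ->
  subgroup H -> (forall x, H x -> M x) -> ~ (forall x, M x -> H x) ->
  forall x, H x -> mult_subgroup m (Z.of_nat p) x.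
Proof.
  intros Hord Hs HHM HMH x Hx.
  destruct (proj1 (HM x) (HHM x Hx)) as [k Hk].
  destruct (classic (Z.of_nat p | k)) as [[z Hz]|Hnd].
  - exists z. rewrite Hk, Hz, Z.mul_comm. reflexivity.
  - exfalso. apply HMH. intros y Hy.
    pose proof (rel_prime_pow_r k _ n (rel_prime_sym _ _ (prime_rel_prime _ Hp k Hnd))) as Hr.
    destruct (rel_prime_bezout _ _ Hr) as [u v Huv].
    assert (Hm : H m).
    { rewrite <- (gpow1 G m), <- Huv, gpowD, (Z.mul_comm u), (Z.mul_comm v), <- !gpowM.
      rewrite Hord, gpow1n, mulg1, <- Hk. apply subgroup_gpow; auto. }
    destruct (proj1 (HM y) Hy) as [a ->]. apply subgroup_gpow; auto.
Qed.

End CyclicPGroup.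

Section CosetPoset.
Variable G : group.
Implicit Types (u v w : G -> Prop) (x y a b : G).

Lemma proper_incl_irrefl u : ~ proper_incl u u.
Proof. intros [_ H]; apply H; auto. Qed.

Lemma proper_incl_trans u v w : proper_incl u v -> proper_incl v w -> proper_incl u w.
Proof.
  intros [Huv Hvu] [Hvw Hwv]. split; [auto|].
  intros Hwu. apply Hwv. intros g Hg. apply Huv, Hwu, Hg.
Qed.

Lemma coset_poset_inhabited u : coset_poset G u -> exists g, u g.
Proof. intros [x [H [[Hs _] ->]]]. exists x. apply lcoset_refl; auto. Qed.

Lemma lcoset_maximal_not_lt (M : G -> Prop) y u : maximal_subgroup M -> coset_poset G u ->
  ~ proper_incl (lcoset y M) u.
Proof.
  intros [[HMs _] Hmax] [x [H [[Hs [g Hg]] ->]]] [Hsub Hnot].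
  assert (Hy : lcoset x H y) by (apply Hsub, lcoset_refl; auto).
  assert (HMH : forall h, M h -> H h).
  { intros h Hh. assert (Hyh : lcoset x H (gmul y h)) by (apply Hsub; exists h; auto).
    rewrite (lcoset_transl G H x y Hs Hy), lcosetE, mulKg in Hyh. exact Hyh. }
  destruct (Hmax H Hs HMH) as [Heq|Hall].
  - apply Hnot. intros g' Hg'. rewrite (lcoset_transl G H x y Hs Hy), lcosetE, Heq in Hg'.
    apply lcosetE, Hg'.
  - apply Hg, Hall.
Qed.

Lemma point_lt_lcoset (H : G -> Prop) a b : subgroup H -> (exists h, H h /\ h <> gone) ->
  lcoset b H a -> proper_incl (lcoset a triv) (lcoset b H).
Proof.
  intros Hs [h [Hh Hh1]] Hab. split.
  - intros g Hg. apply lcoset_triv in Hg. subst; auto.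
  - intros Hall. apply Hh1, (mulgI G a). rewrite mulg1.
    apply lcoset_triv, Hall, (lcoset_transl G H b a Hs Hab). exists h; auto.
Qed.

Lemma lcoset_cycle_neq (M : G -> Prop) s a y : subgroup M -> ~ M s ->
  lcoset a (cycle s) <> lcoset y M.
Proof.
  intros HMs Hs Heq. apply Hs.
  assert (Ha : lcoset y M a) by (rewrite <- Heq; apply lcoset_refl, cycle_subgroup).
  assert (Has : lcoset y M (gmul a s)) by (rewrite <- Heq; exists s; split; auto; apply cycle_id).
  rewrite (lcoset_transl G M y a HMs Ha), lcosetE, mulKg in Has. exact Has.
Qed.

(* A vertex [v] strictly below [y M] is a coset [z H] of a proper subgroup [H] of [M], so
   [H ⊆ K] and [v] lies in a single left coset of [K]. *)
Lemma lcoset_incl_below (M K : G -> Prop) y c u v :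
  subgroup M -> subgroup K ->
  (forall H, subgroup H -> (forall x, H x -> M x) -> ~ (forall x, M x -> H x) ->
     forall x, H x -> K x) ->
  coset_poset G u -> coset_poset G v -> proper_incl u v -> proper_incl v (lcoset y M) ->
  (forall g, u g -> lcoset c K g) <-> (forall g, v g -> lcoset c K g).
Proof.
  intros HMs HKs HK Pu [z [H [[Hs _] ->]]] [Huv _] [Hvy Hny].
  split; [|intros Hv g Hg; apply Hv, Huv, Hg]. intros Hu.
  assert (Hz : lcoset y M z) by (apply Hvy, lcoset_refl; auto).
  assert (HHM : forall h, H h -> M h).
  { intros h Hh. assert (Hzh : lcoset y M (gmul z h)) by (apply Hvy; exists h; auto).
    rewrite (lcoset_transl G M y z HMs Hz), lcosetE, mulKg in Hzh. exact Hzh. }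
  assert (HnMH : ~ (forall x, M x -> H x)).
  { intros Hall. apply Hny. intros g Hg. rewrite (lcoset_transl G M y z HMs Hz) in Hg.
    destruct Hg as [h [Hh ->]]. exists h; auto. }
  destruct (coset_poset_inhabited u Pu) as [q Hq].
  intros g Hg. rewrite (lcoset_transl G H z q Hs (Huv q Hq)) in Hg.
  rewrite (lcoset_transl G K c q HKs (Hu q Hq)).
  destruct Hg as [h [Hh ->]]. exists h; split; auto. apply (HK H); auto.
Qed.

End CosetPoset.

Section OrderComplex.
Context {V : Type} (P : V -> Prop) (lt : V -> V -> Prop).
Hypothesis lt_irrefl : forall u, ~ lt u u.
Hypothesis lt_trans : forall u v w, lt u v -> lt v w -> lt u w.

Lemma lt_asym u v : lt u v -> ~ lt v u.
Proof. intros H1 H2. apply (lt_irrefl u). eauto. Qed.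

Definition edge_chain (a b : V) : chain1 V := fun u v =>
  if excluded_middle_informative (lt a b) then iverson (u = a /\ v = b)
  else - iverson (u = b /\ v = a).

Fixpoint path_chain (l : list V) : chain1 V :=
  match l with
  | a :: ((b :: _) as t) => fun u v => edge_chain a b u v + path_chain t u v
  | _ => fun _ _ => 0
  end.

Fixpoint order_path (l : list V) : Prop :=
  match l with
  | a :: ((b :: _) as t) => P a /\ P b /\ (lt a b \/ lt b a) /\ order_path t
  | _ => True
  end.

Lemma edge_chain_support a b u v : P a -> P b -> (lt a b \/ lt b a) -> edge_chain a b u v <> 0 ->
  P u /\ P v /\ lt u v /\ (u = a \/ u = b) /\ (v = a \/ v = b).
Proof.
  intros Pa Pb Hab. unfold edge_chain, iverson.
  destruct (excluded_middle_informative (lt a b));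
    (destruct excluded_middle_informative as [[-> ->]|]; [|lia]); intuition.
Qed.

Lemma path_chain_support l u v : order_path l -> path_chain l u v <> 0 ->
  P u /\ P v /\ lt u v /\ In u l /\ In v l.
Proof.
  induction l as [|a [|b t] IH]; [simpl; lia|simpl; lia|].
  intros [Pa [Pb [Hab Hok]]] Hne. change (edge_chain a b u v + path_chain (b :: t) u v <> 0) in Hne.
  destruct (Z.eq_dec (edge_chain a b u v) 0) as [E|E].
  - destruct IH as [? [? [? [? ?]]]]; auto; [lia|]. simpl in *; tauto.
  - destruct (edge_chain_support a b u v Pa Pb Hab E) as [? [? [? [Hu Hv]]]].
    simpl; destruct Hu, Hv; subst; tauto.
Qed.

Lemma path_chain_1chain l : order_path l -> is_1chain P lt (path_chain l).
Proof.
  intros Hok. split.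
  - intros u v H. destruct (path_chain_support l u v Hok H) as [? [? [? _]]]; auto.
  - exists (list_prod l l). intros u v H.
    destruct (path_chain_support l u v Hok H) as [_ [_ [_ [? ?]]]]. apply in_prod; auto.
Qed.

Lemma path_chain_boundary (U : list V) l d : NoDup U -> (forall x, In x l -> In x U) ->
  l <> [] -> order_path l -> forall w,
  lsum U (fun u => path_chain l u w - path_chain l w u) = iverson (w = last l d) - iverson (w = hd d l).
Proof.
  intros NU HU Hne Hok w. induction l as [|a [|b t] IH]; [congruence|simpl; rewrite lsum0; [lia|auto]|].
  destruct Hok as [Pa [Pb [Hab Hok]]].
  change (lsum U (fun u => (edge_chain a b u w + path_chain (b :: t) u w)
                         - (edge_chain a b w u + path_chain (b :: t) w u))
    = iverson (w = last (b :: t) d) - iverson (w = a)).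
  rewrite (eq_lsum U _ (fun u => (iverson (u = a) * iverson (w = b) - iverson (u = b) * iverson (w = a))
                                + (path_chain (b :: t) u w - path_chain (b :: t) w u))).
  - rewrite lsumD, IH; [|intros x Hx; apply HU; right; exact Hx|discriminate|exact Hok].
    rewrite lsumB, !lsum_iverson_eq; auto; try (apply HU; simpl; auto). simpl hd. lia.
  - intros x _. unfold edge_chain. rewrite !iverson_and.
    destruct excluded_middle_informative; ring.
Qed.

Lemma closed_path_1cycle l a : order_path l -> hd_error l = Some a -> last l a = a ->
  is_1cycle P lt (path_chain l).
Proof.
  intros Hok Hh Hl. split; [apply path_chain_1chain; auto|]. intros w.
  set (U := nodup classic_eq_dec l).
  assert (NU : NoDup U) by apply NoDup_nodup.
  assert (HU : forall x, In x l -> In x U) by (intros; apply nodup_In; auto).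
  destruct l as [|a' t]; [discriminate|]. injection Hh as ->.
  pose proof (path_chain_boundary U (a :: t) a NU HU ltac:(discriminate) Hok w) as E.
  simpl hd in E. rewrite Hl, Z.sub_diag in E. rewrite <- E.
  apply has_sum_lsum; auto. intros x Hx. apply HU.
  destruct (Z.eq_dec (path_chain (a :: t) x w) 0).
  - apply (path_chain_support (a :: t) w x); auto. lia.
  - apply (path_chain_support (a :: t) x w); auto.
Qed.

Definition signed (phi : V -> V -> Z) (u v : V) : Z :=
  if excluded_middle_informative (lt u v) then phi u v
  else if excluded_middle_informative (lt v u) then - phi v u else 0.

Fixpoint path_sum (phi : V -> V -> Z) (l : list V) : Z :=
  match l with
  | a :: ((b :: _) as t) => signed phi a b + path_sum phi t
  | _ => 0
  end.

Lemma signed_lt phi u v : lt u v -> signed phi u v = phi u v.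
Proof. intros H; unfold signed; destruct excluded_middle_informative; tauto. Qed.

Lemma signed_gt phi u v : lt v u -> signed phi u v = - phi v u.
Proof.
  intros H; unfold signed.
  destruct excluded_middle_informative as [H'|]; [exfalso; eapply lt_asym; eauto|].
  destruct excluded_middle_informative; tauto.
Qed.

Lemma signed_diag phi u : signed phi u u = 0.
Proof.
  unfold signed. destruct (excluded_middle_informative (lt u u)); [exfalso; eapply lt_irrefl; eauto|].
  reflexivity.
Qed.

Lemma path_chain_column (U : list V) l (w : V -> Z) v0 : NoDup U -> (forall x, In x l -> In x U) ->
  order_path l ->
  lsum U (fun u => w u * path_chain l u v0) = path_sum (fun u v => w u * iverson (v = v0)) l.
Proof.
  intros NU HU Hok. induction l as [|a [|b t] IH]; [simpl; apply lsum0; intros; lia..|].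
  destruct Hok as [Pa [Pb [Hab Hok]]].
  change (lsum U (fun u => w u * (edge_chain a b u v0 + path_chain (b :: t) u v0)) =
    signed (fun u v => w u * iverson (v = v0)) a b + path_sum (fun u v => w u * iverson (v = v0)) (b :: t)).
  rewrite (eq_lsum U _ (fun u => w u * edge_chain a b u v0 + w u * path_chain (b :: t) u v0)) by (intros; lia).
  rewrite lsumD, IH by (simpl in *; auto). f_equal. unfold edge_chain.
  destruct excluded_middle_informative as [H|H].
  - rewrite signed_lt by auto.
    rewrite (eq_lsum U _ (fun u => iverson (u = a) * (w u * iverson (v0 = b)))).
    + rewrite lsum_iverson_eq by (simpl in *; auto). f_equal. apply iverson_iff; split; auto.
    + intros x _. rewrite iverson_and. ring.
  - destruct Hab as [|Hba]; [tauto|]. rewrite signed_gt by auto.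
    rewrite (eq_lsum U _ (fun u => iverson (u = b) * (- (w u * iverson (v0 = a))))).
    + rewrite lsum_iverson_eq by (simpl in *; auto). f_equal. f_equal. apply iverson_iff; split; auto.
    + intros x _. rewrite iverson_and. ring.
Qed.

Lemma signed_anti phi u v : signed phi u v = - signed phi v u.
Proof.
  unfold signed.
  destruct (excluded_middle_informative (lt u v)), (excluded_middle_informative (lt v u)); try lia.
  exfalso; eapply lt_asym; eauto.
Qed.

Section Cocycle.
Variable phi : V -> V -> Z.
Hypothesis phi_cocycle : forall a b c, P a -> P b -> P c -> lt a b -> lt b c ->
  phi a b + phi b c = phi a c.

Lemma signed_cocycle u v w : adj P lt u v -> adj P lt v w -> adj P lt u w ->
  signed phi u v + signed phi v w = signed phi u w.
Proof.
  intros [Pu [Pv Huv]] [_ [Pw Hvw]] [_ [_ Huw]].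
  destruct Huv as [<-|[Huv|Huv]]; [rewrite signed_diag; lia|..];
    (destruct Hvw as [<-|[Hvw|Hvw]]; [rewrite signed_diag; lia|..]);
    (destruct Huw as [<-|[Huw|Huw]];
      [rewrite signed_diag, (signed_anti phi v u); lia|..]).
  - rewrite !signed_lt by assumption. auto.
  - exfalso. apply (lt_asym u w); eauto.
  - rewrite (signed_lt phi u v), (signed_gt phi v w), (signed_lt phi u w) by assumption.
    rewrite <- (phi_cocycle u w v); auto. lia.
  - rewrite (signed_lt phi u v), (signed_gt phi v w), (signed_gt phi u w) by assumption.
    rewrite <- (phi_cocycle w u v); auto. lia.
  - rewrite (signed_gt phi u v), (signed_lt phi v w), (signed_lt phi u w) by assumption.
    rewrite <- (phi_cocycle v u w); auto. lia.
  - rewrite (signed_gt phi u v), (signed_lt phi v w), (signed_gt phi u w) by assumption.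
    rewrite <- (phi_cocycle v w u); auto. lia.
  - exfalso. apply (lt_asym u w); eauto.
  - rewrite !signed_gt by assumption. rewrite <- (phi_cocycle w v u); auto. lia.
Qed.

Lemma path_sum_app l u r : path_sum phi (l ++ u :: r) = path_sum phi (l ++ [u]) + path_sum phi (u :: r).
Proof.
  induction l as [|a [|b t] IH]; simpl; [destruct r; lia|lia|].
  simpl in IH. rewrite IH. lia.
Qed.

Lemma path_sum_edge_equiv l l' : edge_equiv P lt l l' -> path_sum phi l = path_sum phi l'.
Proof.
  induction 1 as [l l' Hmove| | |]; [|reflexivity|auto|congruence].
  destruct Hmove as [[l1 [l2 [u [v [w [-> [-> [H1 [H2 H3]]]]]]]]] | [l1 [l2 [u [-> ->]]]]].
  - rewrite (path_sum_app l1 u (v :: w :: l2)), (path_sum_app l1 u (w :: l2)). f_equal. simpl.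
    rewrite <- (signed_cocycle u v w); auto. destruct l2; lia.
  - rewrite (path_sum_app l1 u (u :: l2)), (path_sum_app l1 u l2). f_equal. simpl.
    rewrite signed_diag. destruct l2; lia.
Qed.

End Cocycle.
End OrderComplex.

Definition triangle_vertices {V} (L : list (V * V * V)) : list V :=
  flat_map (fun t => match t with (a, b, c) => [a; b; c] end) L.

Lemma in_triangle_vertices {V} (L : list (V * V * V)) a b c : In (a, b, c) L ->
  In a (triangle_vertices L) /\ In b (triangle_vertices L) /\ In c (triangle_vertices L).
Proof.
  intros H. unfold triangle_vertices. repeat split; apply in_flat_map; exists (a, b, c); simpl; auto.
Qed.

(* Pairing a boundary with the cochain [w u * [v = v0]] at a maximal vertex [v0], with [w]
   constant along edges below [v0], gives zero: the two faces of a 2-simplex ending at [v0]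
   cancel, and no 2-simplex has [v0] in the middle or at the bottom. *)
Lemma boundary_column_pairing {V} (P : V -> Prop) (lt : V -> V -> Prop) (w : V -> Z) v0
  (c : chain1 V) (d : chain2 V) (U : list V) :
  (forall u v x, d u v x <> 0 -> P u /\ P v /\ P x /\ lt u v /\ lt v x) ->
  (forall u v x, d u v x <> 0 -> In u U /\ In v U /\ In x U) ->
  (forall u v, has_sum (fun x => d x u v - d u x v + d u v x) (c u v)) ->
  NoDup U ->
  (forall a b, P a -> P b -> lt a b -> lt b v0 -> w a = w b) ->
  (forall b, P b -> ~ lt v0 b) ->
  lsum U (fun u => w u * c u v0) = 0.
Proof.
  intros Hd HdU Hc NU Hw Hmax.
  assert (Htop : forall u x, d u v0 x = 0).
  { intros u x. destruct (Z.eq_dec (d u v0 x) 0) as [|E]; auto.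
    destruct (Hd _ _ _ E) as [_ [? [? [_ ?]]]]. exfalso; eapply Hmax; eauto. }
  rewrite (eq_lsum U _ (fun u => lsum U (fun x => w u * d x u v0) - lsum U (fun x => w u * d u x v0))).
  - rewrite lsumB, exchange_lsum with (F := fun u x => w u * d x u v0), <- lsumB.
    apply lsum0. intros x _. rewrite <- lsumB. apply lsum0. intros u _.
    destruct (Z.eq_dec (d x u v0) 0) as [E|E]; [rewrite E; lia|].
    destruct (Hd _ _ _ E) as [? [? [? [? ?]]]]. rewrite (Hw x u); auto. lia.
  - intros u Hu. rewrite (has_sumE _ _ U (Hc u v0) NU).
    + rewrite <- !lsumZ, <- lsumB. apply eq_lsum. intros x _. rewrite Htop. lia.
    + intros x Hx. destruct (Z.eq_dec (d x u v0) 0); [destruct (Z.eq_dec (d u x v0) 0)|].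
      * apply (HdU u v0 x). lia.
      * apply (HdU u x v0). auto.
      * apply (HdU x u v0). auto.
Qed.

Lemma lincomb_column {V} (U : list V) (w : V -> Z) v0 a zs :
  lsum U (fun u => w u * lincomb a zs u v0) =
  lsum (combine a zs) (fun az => fst az * lsum U (fun u => w u * snd az u v0)).
Proof.
  transitivity (lsum U (fun u => lsum (combine a zs) (fun az => w u * (fst az * snd az u v0)))).
  - apply eq_lsum; intros u _. symmetry; exact (lsumZ _ _ _).
  - rewrite exchange_lsum. apply eq_lsum; intros az _.
    rewrite <- lsumZ. apply eq_lsum; intros; ring.
Qed.

Lemma lsum_combine_map {X Y : Type} (a : list Z) (I : list X) (f : X -> Y) (g : Z * Y -> Z) :
  lsum (combine a (map f I)) g = lsum (combine a I) (fun ax => g (fst ax, f (snd ax))).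
Proof.
  revert a. induction I as [|i I IH]; intros [|a0 a]; simpl; auto.
  rewrite <- IH. reflexivity.
Qed.

Lemma lsum_combine_coef {X : Type} (I : list X) (a : list Z) k dflt : NoDup I ->
  length a = length I -> (k < length I)%nat ->
  lsum (combine a I) (fun ax => fst ax * iverson (snd ax = nth k I dflt)) = nth k a 0.
Proof.
  revert a k. induction I as [|i I IH]; intros [|a0 a] k ND Hl Hk; simpl in *; try lia.
  inversion ND as [|? ? HiI NI]; subst.
  destruct k as [|k].
  - rewrite iverson_true, lsum0; auto; [lia|]. intros [b x] Hbx. simpl.
    rewrite iverson_false; [lia|]. intros ->. apply HiI, (in_combine_r _ _ _ _ Hbx).
  - rewrite iverson_false, IH; auto; try lia. intros ->. apply HiI, nth_In. lia.
Qed.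

Lemma NoDup_list_prod {A B} (l : list A) (k : list B) : NoDup l -> NoDup k -> NoDup (list_prod l k).
Proof.
  intros Nl Nk. induction Nl as [|a l Ha Nl IH]; simpl; [constructor|].
  apply NoDup_app; auto.
  - apply NoDup_map_NoDup_ForallPairs; auto. intros x y _ _ E. inversion E; auto.
  - intros [x y] H1 H2. apply in_map_iff in H1. destruct H1 as [z [E _]]. inversion E; subst.
    apply in_prod_iff in H2. tauto.
Qed.

Lemma lincomb_app_zeros {V} (a : list Z) (zs : list (chain1 V)) r u v :
  length zs = (length a + r)%nat ->
  lincomb (a ++ repeat 0 r) zs u v = lincomb a (firstn (length a) zs) u v.
Proof.
  unfold lincomb. revert zs. induction a as [|a0 a IH]; intros zs Hl; simpl.
  - revert zs Hl. induction r as [|r IHr]; intros [|z zs] Hl; simpl in *; auto.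
  - destruct zs as [|z0 zs]; simpl in Hl; [lia|]. simpl. rewrite IH; auto.
Qed.

Lemma H1_rank_ge_le {V} (P : V -> Prop) lt k k' : (k <= k')%nat -> H1_rank_ge P lt k' -> H1_rank_ge P lt k.
Proof.
  intros Hkk [zs [Hl [Hcy Hind]]]. exists (firstn k zs). split; [rewrite length_firstn; lia|]. split.
  - rewrite Forall_forall in *. intros x Hx. apply Hcy.
    rewrite <- (firstn_skipn k zs). apply in_or_app; auto.
  - intros a Ha Hex Hbd. apply (Hind (a ++ repeat 0 (k' - k))).
    + rewrite length_app, repeat_length. lia.
    + apply Exists_app; auto.
    + replace (lincomb (a ++ repeat 0 (k' - k)) zs) with (lincomb a (firstn k zs)); [exact Hbd|].
      apply functional_extensionality; intros u; apply functional_extensionality; intros v.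
      rewrite lincomb_app_zeros, Ha; auto. lia.
Qed.

Lemma point_incl {G : group} (a : G) (C : G -> Prop) : (forall g, lcoset a triv g -> C g) <-> C a.
Proof.
  split; intros H.
  - apply H, lcoset_triv; reflexivity.
  - intros g Hg. apply lcoset_triv in Hg. subst; auto.
Qed.

Lemma distinct_lcosets_NoDup {G : group} (M : G -> Prop) reps : distinct_lcosets M reps -> NoDup reps.
Proof.
  induction 1 as [|a l Ha Hl IH]; constructor; auto.
  intros Hin. rewrite Forall_forall in Ha. apply (Ha a Hin). tauto.
Qed.

Section CosetLoops.
Variables (G : group) (M : G -> Prop) (m t : G) (p n : nat).
Hypothesis Hp : prime (Z.of_nat p).
Hypothesis Hnc : ~ cyclic_group G.
Hypothesis Hmax : maximal_subgroup M.
Hypothesis HM : forall x, M x <-> cycle m x.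
Hypothesis Hord : gpow m (Z.of_nat p ^ Z.of_nat n) = gone.
Hypothesis Hexp : forall e, gpow m e = gone -> (Z.of_nat p | e).
Hypothesis Ht : ~ M t.

Let PV := coset_poset G.
Let K := mult_subgroup m (Z.of_nat p).

Lemma p_ge2 : (2 <= p)%nat.
Proof. pose proof (prime_ge_2 _ Hp). lia. Qed.

Lemma M_subgroup : subgroup M.
Proof. exact (proj1 (proj1 Hmax)). Qed.

Lemma M_gpow a : M (gpow m a).
Proof. apply HM. exists a; reflexivity. Qed.

Lemma m_neq1 : m <> gone.
Proof.
  intros E. pose proof (Hexp 1 ltac:(rewrite gpow1; exact E)) as H1.
  apply Z.divide_pos_le in H1; [|lia]. pose proof p_ge2. lia.
Qed.

Lemma neq1_notin_M s : ~ M s -> s <> gone.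
Proof. intros Hs ->. apply Hs, M_subgroup. Qed.

(* [x t * bridge i = x m^i], so the coset [x t <bridge i>] joins [{x t}] and [{x m^i}]. *)
Definition bridge (i : nat) : G := gmul (ginv t) (gpow m (Z.of_nat i)).

Lemma bridge_notin_M i : ~ M (bridge i).
Proof.
  intros Hs. apply Ht. destruct M_subgroup as [_ [HMM HMI]].
  replace t with (gmul (gpow m (Z.of_nat i)) (ginv (bridge i))).
  - apply HMM; [apply M_gpow|auto].
  - unfold bridge. rewrite invMg, invgK, mulKVg. reflexivity.
Qed.

Lemma coset_poset_point x : PV (lcoset x triv).
Proof.
  exists x, triv. split; auto. split; [apply triv_subgroup|].
  exists t. apply neq1_notin_M, Ht.
Qed.

Lemma coset_poset_M x : PV (lcoset x M).
Proof. exists x, M. split; auto. exact (proj1 Hmax). Qed.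

Lemma coset_poset_cycle x g : PV (lcoset x (cycle g)).
Proof.
  exists x, (cycle g). split; auto. split; [apply cycle_subgroup|].
  apply NNPP; intros H. apply Hnc. exists g. intros y.
  apply NNPP; intros Hy. apply H. exists y. intros [a ->]. apply Hy. eauto.
Qed.

Lemma point_lt_cycle (s a b : G) : s <> gone -> lcoset b (cycle s) a ->
  proper_incl (lcoset a triv) (lcoset b (cycle s)).
Proof. intros Hs Hab. apply point_lt_lcoset; auto; [apply cycle_subgroup|exists s; split; auto; apply cycle_id]. Qed.

Definition coset_loop (x : G) (i : nat) : list (G -> Prop) :=
  [lcoset x triv; lcoset x (cycle t); lcoset (gmul x t) triv; lcoset (gmul x t) (cycle (bridge i));
   lcoset (gmul x (gpow m (Z.of_nat i))) triv; lcoset x M; lcoset x triv].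

Lemma coset_loop_edges x i :
  proper_incl (lcoset x triv) (lcoset x (cycle t)) /\
  proper_incl (lcoset (gmul x t) triv) (lcoset x (cycle t)) /\
  proper_incl (lcoset (gmul x t) triv) (lcoset (gmul x t) (cycle (bridge i))) /\
  proper_incl (lcoset (gmul x (gpow m (Z.of_nat i))) triv) (lcoset (gmul x t) (cycle (bridge i))) /\
  proper_incl (lcoset (gmul x (gpow m (Z.of_nat i))) triv) (lcoset x M) /\
  proper_incl (lcoset x triv) (lcoset x M).
Proof.
  pose proof (neq1_notin_M t Ht) as Ht1.
  pose proof (neq1_notin_M _ (bridge_notin_M i)) as Hb1.
  assert (HmM : exists h, M h /\ h <> gone).
  { exists m. split; [|apply m_neq1]. rewrite <- (gpow1 G m). apply M_gpow. }
  assert (Hxm : lcoset x M (gmul x (gpow m (Z.of_nat i)))) by (exists (gpow m (Z.of_nat i)); split; auto; apply M_gpow).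
  assert (Hxb : lcoset (gmul x t) (cycle (bridge i)) (gmul x (gpow m (Z.of_nat i)))).
  { exists (bridge i). split; [apply cycle_id|]. unfold bridge. rewrite <- gmulA, mulKVg. reflexivity. }
  split; [|split; [|split; [|split; [|split]]]].
  - apply point_lt_cycle, lcoset_refl, cycle_subgroup; auto.
  - apply point_lt_cycle; auto. exists t. split; auto. apply cycle_id.
  - apply point_lt_cycle, lcoset_refl, cycle_subgroup; auto.
  - apply point_lt_cycle; auto.
  - apply point_lt_lcoset; auto. apply M_subgroup.
  - apply point_lt_lcoset, lcoset_refl, M_subgroup; auto. apply M_subgroup.
Qed.

Lemma coset_loop_order_path x i : order_path PV proper_incl (coset_loop x i).
Proof.
  destruct (coset_loop_edges x i) as [E1 [E2 [E3 [E4 [E5 E6]]]]].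
  repeat split; auto using coset_poset_point, coset_poset_M, coset_poset_cycle.
Qed.

Lemma coset_loop_1cycle x i : is_1cycle PV proper_incl (path_chain proper_incl (coset_loop x i)).
Proof. apply (closed_path_1cycle _ _ _ (lcoset x triv)); auto using coset_loop_order_path. Qed.

Definition coset_weight (y : G) (j : nat) (u : G -> Prop) : Z :=
  iverson (forall g, u g -> lcoset (gmul y (gpow m (Z.of_nat j))) K g).

Definition coset_cochain (y : G) (j : nat) (u v : G -> Prop) : Z :=
  coset_weight y j u * iverson (v = lcoset y M).

Lemma K_subgroup : subgroup K.
Proof. apply mult_subgroup_subgroup. Qed.

Lemma coset_weight_below y j u v : PV u -> PV v -> proper_incl u v -> proper_incl v (lcoset y M) ->
  coset_weight y j u = coset_weight y j v.
Proof.
  intros. apply iverson_iff, (lcoset_incl_below G M K y); auto using M_subgroup, K_subgroup.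
  intros L Hs HHM HMH. apply (proper_subgroup_cyclic_p_group G M m p n); auto.
Qed.

Lemma coset_cochain_cocycle y j u v w : PV u -> PV v -> PV w ->
  proper_incl u v -> proper_incl v w ->
  coset_cochain y j u v + coset_cochain y j v w = coset_cochain y j u w.
Proof.
  intros Pu Pv Pw Huv Hvw. unfold coset_cochain.
  rewrite (iverson_false (v = lcoset y M)) by (intros ->; eapply lcoset_maximal_not_lt; eauto).
  destruct (classic (w = lcoset y M)) as [->|Hw].
  - rewrite (coset_weight_below y j u v); auto. lia.
  - rewrite !iverson_false by auto. lia.
Qed.

Lemma coset_loop_path_sum x i y j :
  path_sum proper_incl (coset_cochain y j) (coset_loop x i) =
  (coset_weight y j (lcoset (gmul x (gpow m (Z.of_nat i))) triv) - coset_weight y j (lcoset x triv))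
  * iverson (lcoset x M = lcoset y M).
Proof.
  pose proof (proper_incl_irrefl G) as Hirr. pose proof (proper_incl_trans G) as Htr.
  destruct (coset_loop_edges x i) as [E1 [E2 [E3 [E4 [E5 E6]]]]].
  unfold coset_loop. cbn [path_sum].
  rewrite (signed_lt PV _ _ _ _ E1), (signed_gt PV _ Hirr Htr _ _ _ E2), (signed_lt PV _ _ _ _ E3),
    (signed_gt PV _ Hirr Htr _ _ _ E4), (signed_lt PV _ _ _ _ E5), (signed_gt PV _ Hirr Htr _ _ _ E6).
  unfold coset_cochain.
  rewrite (iverson_false (lcoset x (cycle t) = lcoset y M)),
    (iverson_false (lcoset (gmul x t) (cycle (bridge i)) = lcoset y M))
    by (apply lcoset_cycle_neq; auto using M_subgroup, bridge_notin_M).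
  ring.
Qed.

Lemma lcoset_K_gpow y (a b : Z) :
  lcoset (gmul y (gpow m b)) K (gmul y (gpow m a)) <-> (Z.of_nat p | a - b).
Proof.
  rewrite lcosetE, invMg, <- gmulA, mulKg, <- gpowN, <- gpowD. split.
  - intros [z Hz]. apply gpow_eq_sub, Hexp in Hz.
    replace (a - b) with ((Z.of_nat p * z - (- b + a)) * -1 + Z.of_nat p * z) by ring.
    apply Z.divide_add_r; [apply Z.divide_mul_l, Hz|exists z; ring].
  - intros [z Hz]. exists z. f_equal. rewrite Z.mul_comm, <- Hz. ring.
Qed.

Lemma divide_small_eq0 (d : Z) : (Z.of_nat p | d) -> - Z.of_nat p < d < Z.of_nat p -> d = 0.
Proof.
  intros [k ->] H. pose proof p_ge2. destruct (Z.lt_trichotomy k 0) as [Hk|[->|Hk]]; nia.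
Qed.

Lemma coset_weight_base y j : (1 <= j <= p - 1)%nat -> coset_weight y j (lcoset y triv) = 0.
Proof.
  intros Hj. apply iverson_false. rewrite point_incl. rewrite <- (mulg1 G y) at 2.
  change gone with (gpow m 0). rewrite lcoset_K_gpow. intros Hd.
  apply divide_small_eq0 in Hd; lia.
Qed.

Lemma coset_weight_point y i j : (1 <= i <= p - 1)%nat -> (1 <= j <= p - 1)%nat ->
  coset_weight y j (lcoset (gmul y (gpow m (Z.of_nat i))) triv) = iverson (i = j).
Proof.
  intros Hi Hj. apply iverson_iff. rewrite point_incl, lcoset_K_gpow. split.
  - intros Hd. apply divide_small_eq0 in Hd; lia.
  - intros ->. exists 0. lia.
Qed.

Lemma coset_loop_pairing reps x i y j : distinct_lcosets M reps -> In x reps -> In y reps ->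
  (1 <= i <= p - 1)%nat -> (1 <= j <= p - 1)%nat ->
  path_sum proper_incl (coset_cochain y j) (coset_loop x i) = iverson ((x, i) = (y, j)).
Proof.
  intros Hd Hx Hy Hi Hj. rewrite coset_loop_path_sum.
  destruct (classic (x = y)) as [<-|Hxy].
  - rewrite coset_weight_base, coset_weight_point, (iverson_true (lcoset x M = _)) by auto.
    rewrite Z.sub_0_r, Z.mul_1_r. apply iverson_iff. split; [intros ->|intros E; inversion E]; auto.
  - rewrite (iverson_false ((x, i) = (y, j))) by congruence.
    rewrite (iverson_false (lcoset x M = lcoset y M)); [lia|]. intros E.
    destruct (ForallOrdPairs_In Hd x y Hx Hy) as [|[Hne|Hne]]; auto; apply Hne; rewrite E; tauto.
Qed.

Definition loop_chain (xi : G * nat) : chain1 (G -> Prop) :=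
  path_chain proper_incl (coset_loop (fst xi) (snd xi)).

Lemma loop_chain_column U y j xi : NoDup U ->
  (forall u, In u (coset_loop (fst xi) (snd xi)) -> In u U) ->
  lsum U (fun u => coset_weight y j u * loop_chain xi u (lcoset y M)) =
  path_sum proper_incl (coset_cochain y j) (coset_loop (fst xi) (snd xi)).
Proof.
  intros NU HU. apply (path_chain_column PV); auto using coset_loop_order_path.
  - apply proper_incl_irrefl.
  - apply proper_incl_trans.
Qed.

Theorem coset_loops_independent reps : distinct_lcosets M reps ->
  H1_rank_ge PV proper_incl ((p - 1) * length reps).
Proof.
  intros Hd. set (I := list_prod reps (seq 1 (p - 1))).
  assert (NDI : NoDup I).
  { apply NoDup_list_prod; [eapply distinct_lcosets_NoDup; eauto|apply seq_NoDup]. }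
  assert (HlI : length I = ((p - 1) * length reps)%nat).
  { unfold I. rewrite length_prod, length_seq. lia. }
  exists (map loop_chain I). split; [|split].
  - rewrite length_map. exact HlI.
  - apply Forall_forall. intros z Hz. apply in_map_iff in Hz. destruct Hz as [xi [<- _]].
    apply coset_loop_1cycle.
  - intros a Ha Hex [d [[Hdsupp [L HL]] Hc]].
    apply Exists_nth in Hex. destruct Hex as [k [dflt [Hk Hnz]]].
    rewrite nth_indep with (d' := 0) in Hnz by exact Hk.
    destruct (nth k I (gone, 0%nat)) as [y j] eqn:Ek.
    assert (Hyj : In (y, j) I) by (rewrite <- Ek; apply nth_In; lia).
    apply in_prod_iff in Hyj. destruct Hyj as [Hy Hj]. apply in_seq in Hj.
    set (U := nodup classic_eq_dec
      (triangle_vertices L ++ flat_map (fun xi => coset_loop (fst xi) (snd xi)) I)).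
    assert (NU : NoDup U) by apply NoDup_nodup.
    assert (Hpair : lsum U (fun u => coset_weight y j u * lincomb a (map loop_chain I) u (lcoset y M)) = 0).
    { apply (boundary_column_pairing PV proper_incl _ _ _ d U); [exact Hdsupp| |exact Hc|exact NU| |].
      - intros u v x Hx. destruct (in_triangle_vertices L u v x (HL _ _ _ Hx)) as [? [? ?]].
        unfold U. rewrite !nodup_In, !in_app_iff. auto.
      - intros u v Pu Pv Huv Hv. apply coset_weight_below; auto.
      - intros v Pv. apply lcoset_maximal_not_lt; auto. }
    rewrite lincomb_column, lsum_combine_map in Hpair.
    rewrite (eq_lsum _ _ (fun ax => fst ax * iverson (snd ax = nth k I (gone, 0%nat)))) in Hpair.
    + rewrite lsum_combine_coef in Hpair; auto; lia.
    + intros [c [x i]] Hin. apply in_combine_r in Hin. simpl. f_equal.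
      rewrite loop_chain_column, Ek; auto.
      * apply in_prod_iff in Hin. destruct Hin as [Hx Hi]. apply in_seq in Hi.
        apply (coset_loop_pairing reps); auto; lia.
      * intros u Hu. unfold U. rewrite nodup_In, in_app_iff, in_flat_map. right. exists (x, i); auto.
Qed.

Theorem coset_poset_not_simply_connected : ~ simply_connected PV proper_incl.
Proof.
  intros [_ [_ Hsc]].
  assert (Hp1 : (1 <= 1 <= p - 1)%nat) by (pose proof p_ge2; lia).
  assert (Hpath : is_edge_path PV proper_incl (coset_loop gone 1)).
  { destruct (coset_loop_edges gone 1) as [E1 [E2 [E3 [E4 [E5 E6]]]]].
    repeat split; auto using coset_poset_point, coset_poset_M, coset_poset_cycle.
    apply coset_poset_point. }
  pose proof (Hsc _ _ (coset_poset_point gone) Hpath eq_refl eq_refl) as Htriv.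
  apply (path_sum_edge_equiv PV proper_incl (proper_incl_irrefl G) (proper_incl_trans G)
    (coset_cochain gone 1) (coset_cochain_cocycle gone 1)) in Htriv.
  rewrite (coset_loop_pairing [gone] gone 1 gone 1), iverson_true in Htriv by (repeat constructor || lia).
  discriminate.
Qed.

End CosetLoops.

Lemma infinite_distinct_lcosets (G : group) (M : G -> Prop) (LM : list G) :
  subgroup M -> (forall x, M x <-> In x LM) -> infinite_group G ->
  forall k, exists reps, distinct_lcosets M reps /\ length reps = k.
Proof.
  intros HMs HL Hinf k. induction k as [|k [reps [Hd Hl]]].
  - exists []. split; [constructor|reflexivity].
  - assert (Hg : exists g, forall r, In r reps -> ~ lcoset r M g).
    { apply NNPP; intros Hno. apply Hinf. exists (flat_map (fun r => map (gmul r) LM) reps).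
      intros x. apply NNPP; intros Hx. apply Hno. exists x. intros r Hr [h [Hh ->]]. apply Hx.
      apply in_flat_map. exists r. split; auto. apply in_map, HL, Hh. }
    destruct Hg as [g Hg]. exists (g :: reps). split; [|simpl; lia].
    constructor; auto. apply Forall_forall. intros y Hy Hiff. apply (Hg y Hy), Hiff, lcoset_refl, HMs.
Qed.

Theorem mainTheorem10 (G : group) (M : G -> Prop) (p n : nat) :
  prime (Z.of_nat p) -> (1 <= n)%nat ->
  ~ cyclic_group G ->
  maximal_subgroup M -> cyclic_subgroup M -> has_card M (p ^ n) ->
  (forall reps : list G, distinct_lcosets M reps ->
     H1_rank_ge (coset_poset G) proper_incl ((p - 1) * length reps)) /\
  (infinite_group G -> H1_infinite_rank (coset_poset G) proper_incl) /\
  ~ simply_connected (coset_poset G) proper_incl.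
Proof.
  intros Hp Hn Hnc Hmax [m HM] Hcard.
  destruct (cyclic_p_group_exponent G M m p n HM Hn Hcard) as [Hord Hexp].
  destruct (proj2 (proj1 Hmax)) as [t Ht].
  split; [|split].
  - exact (coset_loops_independent G M m t p n Hp Hnc Hmax HM Hord Hexp Ht).
  - intros Hinf k. destruct Hcard as [LM [_ [_ HL]]].
    destruct (infinite_distinct_lcosets G M LM (proj1 (proj1 Hmax)) HL Hinf k) as [reps [Hd Hl]].
    apply (H1_rank_ge_le _ _ k ((p - 1) * length reps)).
    + pose proof (prime_ge_2 _ Hp). rewrite Hl. nia.
    + exact (coset_loops_independent G M m t p n Hp Hnc Hmax HM Hord Hexp Ht reps Hd).
  - exact (coset_poset_not_simply_connected G M m t p n Hp Hnc Hmax HM Hord Hexp Ht).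
Qed.
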